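(* Let $S$ be an intra-regular $\Gamma$-AG$^{**}$-groupoid. Then every right $\Gamma$-ideal, every left $\Gamma$-ideal, and every two-sided $\Gamma$-ideal of $S$ is $\Gamma$-semiprime.
   Context: Let $S$ and $\Gamma$ be nonempty sets with a map $S\times\Gamma\times S\to S$, $(x,\gamma,y)\mapsto x\gamma y$. $S$ is a $\Gamma$-AG-groupoid if $(x\gamma y)\delta z=(z\gamma y)\delta x$ for all $x,y,z\in S$, $\gamma,\delta\in\Gamma$; it is a $\Gamma$-AG$^{**}$-groupoid if moreover $a\alpha(b\beta c)=b\alpha(a\beta c)$ for all $a,b,c\in S$, $\alpha,\beta\in\Gamma$. For subsets $A,B\subseteq S$, $A\Gamma B=\{a\gamma b: a\in A,\gamma\in\Gamma,b\in B\}$. $S$ is intra-regular if for every $a\in S$ there exist $x,y\in S$ and $\beta,\gamma,\delta\in\Gamma$ with $a=(x\beta(a\delta a))\gamma y$. A nonempty subset $A$ is a left (right) $\Gamma$-ideal if $S\Gamma A\subseteq A$ ($A\Gamma S\subseteq A$), two-sided if both. A subset $P\subseteq S$ is $\Gamma$-semiprime if for every $a\in S$, $a\Gamma a\subseteq P$ implies $a\in P$. *)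

Set Implicit Arguments.

Section Gamma.
Variables (S G : Type) (op : S -> G -> S -> S).

Definition is_GammaAG : Prop :=
  forall (x y z : S) (g d : G), op (op x g y) d z = op (op z g y) d x.

Definition is_GammaAGss : Prop :=
  is_GammaAG /\
  forall (a b c : S) (al be : G), op a al (op b be c) = op b al (op a be c).

Definition intra_regular : Prop :=
  forall a : S, exists (x y : S) (be ga de : G),
    a = op (op x be (op a de a)) ga y.

Definition left_Gamma_ideal (A : S -> Prop) : Prop :=
  (exists a, A a) /\ forall (s : S) (g : G) (a : S), A a -> A (op s g a).

Definition right_Gamma_ideal (A : S -> Prop) : Prop :=
  (exists a, A a) /\ forall (a : S) (g : G) (s : S), A a -> A (op a g s).

Definition two_sided_Gamma_ideal (A : S -> Prop) : Prop :=
  left_Gamma_ideal A /\ right_Gamma_ideal A.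

Definition Gamma_semiprime (P : S -> Prop) : Prop :=
  forall a : S, (forall g : G, P (op a g a)) -> P a.

End Gamma.

(* Intra-regularity together with the left invertive law and the paramedial
   law a(bc) = b(ac) lets one rewrite any element a as a product in which
   aΓa sits innermost on the right of three left multiplications, and
   alternatively innermost on the left of three right multiplications.  So
   any set that contains aΓa and is closed under left (resp. right)
   multiplication contains a. *)
From Stdlib Require Import Setoid.

Set Implicit Arguments.

Section IntraRegularAGss.

Variables (S G : Type) (op : S -> G -> S -> S).
Hypothesis left_invertive : is_GammaAG op.
Hypothesis paramedial :
  forall (a b c : S) (al be : G), op a al (op b be c) = op b al (op a be c).
Hypothesis Hir : intra_regular op.

Lemma GammaAG_medial (x y z w : S) (g d e : G) :
  op (op x g y) d (op z e w) = op (op x g z) d (op y e w).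
Proof.
  rewrite left_invertive, (left_invertive z), left_invertive.
  reflexivity.
Qed.

Lemma intra_regular_left_decomposition (a : S) :
  exists (s t u : S) (g1 g2 g3 de : G),
    a = op s g1 (op t g2 (op u g3 (op a de a))).
Proof.
  destruct (Hir a) as (x & y & be & ga & de & Ea).
  set (N := op a de a) in *.
  set (k := op y be N).
  set (q := op x de k).
  assert (Ek : a = op k ga x) by (unfold k; rewrite <- left_invertive; exact Ea).
  assert (EN : N = op (op a ga x) de k)
    by (unfold N; rewrite Ek at 1; apply left_invertive).
  assert (Eq : op x be N = op (op q ga x) be a)
    by (rewrite EN, paramedial; apply left_invertive).
  assert (Emed : op (op q ga x) be a = op (op q ga k) be (op x ga x))
    by (rewrite Ek at 1; apply GammaAG_medial).
  exists (op y be (op x ga x)), q, y, ga, ga, be, de.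
  rewrite Ea at 1; rewrite Eq, Emed; apply left_invertive.
Qed.

Lemma intra_regular_right_decomposition (a : S) :
  exists (s t u : S) (g1 g2 g3 de : G),
    a = op (op (op (op a de a) g1 s) g2 t) g3 u.
Proof.
  destruct (Hir a) as (x & y & be & ga & de & Ea).
  set (N := op a de a) in *.
  set (p := op x be N) in *.
  assert (Ep : p = op a be (op x de a)) by (unfold p, N; apply paramedial).
  assert (Ecollapse : op (op N ga y) be (op x be (op x de a)) = p).
  { rewrite paramedial, <- left_invertive, paramedial.
    fold p; rewrite left_invertive, <- Ea.
    symmetry; exact Ep. }
  exists y, (op x be (op x de a)), y, ga, be, ga, de.
  fold N; rewrite Ecollapse; exact Ea.
Qed.

Lemma left_Gamma_ideal_semiprime (A : S -> Prop) :
  left_Gamma_ideal op A -> Gamma_semiprime op A.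
Proof.
  intros [_ HA] a Ha.
  destruct (intra_regular_left_decomposition a) as (s & t & u & g1 & g2 & g3 & de & ->).
  auto.
Qed.

Lemma right_Gamma_ideal_semiprime (A : S -> Prop) :
  right_Gamma_ideal op A -> Gamma_semiprime op A.
Proof.
  intros [_ HA] a Ha.
  destruct (intra_regular_right_decomposition a) as (s & t & u & g1 & g2 & g3 & de & ->).
  auto.
Qed.

End IntraRegularAGss.

Theorem mainTheorem14 (S G : Type) (op : S -> G -> S -> S)
  (HS : is_GammaAGss op) (HG : inhabited G) (Hne : inhabited S)
  (Hir : intra_regular op) :
  (forall A : S -> Prop, right_Gamma_ideal op A -> Gamma_semiprime op A) /\
  (forall A : S -> Prop, left_Gamma_ideal op A -> Gamma_semiprime op A) /\
  (forall A : S -> Prop, two_sided_Gamma_ideal op A -> Gamma_semiprime op A).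
Proof.
  destruct HS as [left_invertive paramedial].
  split; [| split].
  - exact (right_Gamma_ideal_semiprime left_invertive paramedial Hir).
  - exact (left_Gamma_ideal_semiprime left_invertive paramedial Hir).
  - intros A [HAl _].
    exact (left_Gamma_ideal_semiprime left_invertive paramedial Hir HAl).
Qed.
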